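(* For a given diagonal section $\delta$ the function $D_\delta\colon [0,1]^2\to[0,1]$ defined by $$D_\delta(x,y)=\begin{cases}\overline{C}_\delta(x,y); & x\le y,\\ B_\delta(x,y); & x\ge y,\end{cases}$$ (the diagonal splice of $\overline{C}_\delta$ and $B_\delta$) is a copula.
   Context: A diagonal section is a function $\delta\colon[0,1]\to[0,1]$ that is the diagonal $x\mapsto C(x,x)$ of some bivariate copula $C$; equivalently $\delta(x)\le x$ for all $x$, $0\le\delta(y)-\delta(x)\le 2(y-x)$ for $x\le y$, and $\delta(1)=1$. Write $\widehat{\delta}(x)=x-\delta(x)$. Here $\overline{C}_\delta(x,y)=\sup\{C(x,y)\colon C \text{ a copula with } C(t,t)=\delta(t)\ \forall t\}$ is the pointwise supremum of all copulas with diagonal section $\delta$, and $B_\delta$ is the Bertino copula $B_\delta(x,y)=\min\{x,y\}-\min_{t\in[\min\{x,y\},\max\{x,y\}]}\widehat{\delta}(t)$. The two functions agree on the diagonal (both equal $\delta$ there), so the splice is well defined. *)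

From HB Require Import structures.
From mathcomp Require Import all_boot all_order all_algebra.
From mathcomp Require Import all_classical all_reals.
Set Implicit Arguments. Unset Strict Implicit. Unset Printing Implicit Defensive.
Import Order.TTheory GRing.Theory Num.Theory.
Local Open Scope classical_set_scope.
Local Open Scope ring_scope.

Section Copulas.
Variable R : realType.

Definition unit_I (x : R) : Prop := 0 <= x <= 1.

(* A bivariate copula, viewed as a function R -> R -> R whose values
   on [0,1]^2 are the only relevant ones: boundary conditions and
   2-increasingness on [0,1]^2. *)
Definition copula (C : R -> R -> R) : Prop :=
  (forall x, unit_I x -> C x 0 = 0 /\ C 0 x = 0) /\
  (forall x, unit_I x -> C x 1 = x /\ C 1 x = x) /\
  (forall x1 x2 y1 y2, unit_I x1 -> unit_I x2 -> unit_I y1 -> unit_I y2 ->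
     x1 <= x2 -> y1 <= y2 ->
     0 <= C x2 y2 - C x2 y1 - C x1 y2 + C x1 y1).

Definition has_diagonal (C : R -> R -> R) (delta : R -> R) : Prop :=
  forall t, unit_I t -> C t t = delta t.

Definition diagonal_section (delta : R -> R) : Prop :=
  exists C, copula C /\ has_diagonal C delta.

Definition Cbar (delta : R -> R) (x y : R) : R :=
  sup [set C x y | C in [set C | copula C /\ has_diagonal C delta]].

Definition delta_hat (delta : R -> R) (t : R) : R := t - delta t.

(* Bertino copula; the minimum of the continuous function delta_hat over
   the compact interval is written as its infimum (it is attained). *)
Definition Bertino (delta : R -> R) (x y : R) : R :=
  Num.min x y -
  inf [set delta_hat delta t | t in [set t | Num.min x y <= t <= Num.max x y]].

Definition Dsplice (delta : R -> R) (x y : R) : R :=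
  if x <= y then Cbar delta x y else Bertino delta x y.

End Copulas.

From HB Require Import structures.
From mathcomp Require Import all_boot all_order all_algebra.
From mathcomp Require Import all_classical all_reals.
From mathcomp Require Import ring lra.
Set Implicit Arguments. Unset Strict Implicit. Unset Printing Implicit Defensive.
Import Order.TTheory GRing.Theory Num.Theory.
Local Open Scope classical_set_scope.
Local Open Scope ring_scope.

(* Call f admissible if f 0 = 0 and on [0,1] the increments of f are bounded
   by those of both t and delta t; let c be the supremum of all admissible
   functions.  If C is a copula with diagonal delta and x <= y, gluing an
   admissible g on [0,x] to u |-> g x + C x u - delta x on [x,1] gives an
   admissible function, whence C x y <= min(x, delta x + c y - c x) =: G x y.
   Splicing G above the diagonal with the Bertino copula below it yields a
   copula with diagonal delta: every rectangle in [0,1]^2 decomposes into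
   rectangles inside one triangle and squares on the diagonal, and the
   volumes of these pieces are nonnegative.  So the bound G is attained,
   Cbar_delta = G above the diagonal, and D_delta is this spliced copula. *)

Ltac case_min_max :=
  repeat match goal with
  | |- context [Num.min ?a ?b] => case: (leP a b) => ?
  | |- context [Num.max ?a ?b] => case: (leP a b) => ?
  end.

Lemma unit_IP (R : realType) (x : R) : unit_I x -> 0 <= x /\ x <= 1.
Proof. by case/andP. Qed.

Definition volume (T : Type) (V : zmodType) (F : T -> T -> V) (x1 x2 y1 y2 : T) : V :=
  F x2 y2 - F x2 y1 - F x1 y2 + F x1 y1.

Section VolumeSplitting.
Variables (R : realDomainType) (F : R -> R -> R).

Lemma volume_splitx x1 x2 x3 y1 y2 :
  volume F x1 x3 y1 y2 = volume F x1 x2 y1 y2 + volume F x2 x3 y1 y2.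
Proof. by rewrite /volume; ring. Qed.

Lemma volume_splity x1 x2 y1 y2 y3 :
  volume F x1 x2 y1 y3 = volume F x1 x2 y1 y2 + volume F x1 x2 y2 y3.
Proof. by rewrite /volume; ring. Qed.

Hypothesis volume_upper_ge0 : forall x1 x2 y1 y2,
  0 <= x1 -> x1 <= x2 -> x2 <= y1 -> y1 <= y2 -> y2 <= 1 ->
  0 <= volume F x1 x2 y1 y2.
Hypothesis volume_lower_ge0 : forall x1 x2 y1 y2,
  0 <= y1 -> y1 <= y2 -> y2 <= x1 -> x1 <= x2 -> x2 <= 1 ->
  0 <= volume F x1 x2 y1 y2.
Hypothesis volume_square_ge0 : forall a b,
  0 <= a -> a <= b -> b <= 1 -> 0 <= volume F a b a b.

Lemma volume_corner_ge0 a x y :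
  0 <= a -> a <= x -> x <= 1 -> a <= y -> y <= 1 -> 0 <= volume F a x a y.
Proof.
move=> a0 ax x1 ay y1; case: (leP x y) => [xy | yx].
  rewrite (volume_splity _ _ _ x); apply: addr_ge0; first exact: volume_square_ge0.
  exact: volume_upper_ge0.
rewrite (volume_splitx _ y); apply: addr_ge0; first exact: volume_square_ge0.
by apply: volume_lower_ge0 => //; apply: ltW.
Qed.

Lemma volume_ge0_by_diagonal x1 x2 y1 y2 :
  0 <= x1 -> x1 <= x2 -> x2 <= 1 -> 0 <= y1 -> y1 <= y2 -> y2 <= 1 ->
  0 <= volume F x1 x2 y1 y2.
Proof.
move=> x10 x12 x21 y10 y12 y21; case: (leP x1 y1) => [x1y1 | y1x1].
  case: (leP x2 y1) => [x2y1 | y1x2]; first exact: volume_upper_ge0.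
  rewrite (volume_splitx _ y1); apply: addr_ge0; first exact: volume_upper_ge0.
  by apply: volume_corner_ge0 => //; apply: ltW.
case: (leP y2 x1) => [y2x1 | x1y2]; first exact: volume_lower_ge0.
rewrite (volume_splity _ _ _ x1); apply: addr_ge0.
  by apply: volume_lower_ge0 => //; apply: ltW.
by apply: volume_corner_ge0 => //; apply: ltW.
Qed.

End VolumeSplitting.

Lemma copula_ext (R : realType) (C D : R -> R -> R) :
  (forall x y, unit_I x -> unit_I y -> C x y = D x y) -> copula C -> copula D.
Proof.
move=> CD [C0 [C1 C2]].
have I0 : unit_I (0 : R) by apply/andP; rewrite lexx ler01.
have I1 : unit_I (1 : R) by apply/andP; rewrite lexx ler01.
split; first by move=> x Ix; rewrite -!CD //; apply: C0.
split; first by move=> x Ix; rewrite -!CD //; apply: C1.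
by move=> x1 x2 y1 y2 *; rewrite -!CD //; apply: C2.
Qed.

Section CopulaFacts.
Variables (R : realType) (C : R -> R -> R).
Hypothesis copulaC : copula C.

Lemma copula_volume_ge0 x1 x2 y1 y2 :
  0 <= x1 -> x1 <= x2 -> x2 <= 1 -> 0 <= y1 -> y1 <= y2 -> y2 <= 1 ->
  0 <= volume C x1 x2 y1 y2.
Proof. by case: copulaC => _ [_ C2] *; apply: C2 => //; apply/andP; split; lra. Qed.

Lemma copula_grounded x : 0 <= x -> x <= 1 -> C x 0 = 0 /\ C 0 x = 0.
Proof. by case: copulaC => C0 _ *; apply: C0; apply/andP. Qed.

Lemma copula_margins x : 0 <= x -> x <= 1 -> C x 1 = x /\ C 1 x = x.
Proof. by case: copulaC => _ [C1 _] *; apply: C1; apply/andP. Qed.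

Lemma copula_monol y x1 x2 : 0 <= y -> y <= 1 ->
  0 <= x1 -> x1 <= x2 -> x2 <= 1 -> C x1 y <= C x2 y.
Proof.
move=> y0 y1 x10 x12 x21.
have := copula_volume_ge0 x10 x12 x21 (lexx 0) y0 y1; rewrite /volume.
have [-> _] := copula_grounded x10 (le_trans x12 x21).
have [-> _] := copula_grounded (le_trans x10 x12) x21.
lra.
Qed.

Lemma copula_monor x y1 y2 : 0 <= x -> x <= 1 ->
  0 <= y1 -> y1 <= y2 -> y2 <= 1 -> C x y1 <= C x y2.
Proof.
move=> x0 x1 y10 y12 y21.
have := copula_volume_ge0 (lexx 0) x0 x1 y10 y12 y21; rewrite /volume.
have [_ ->] := copula_grounded y10 (le_trans y12 y21).
have [_ ->] := copula_grounded (le_trans y10 y12) y21.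
lra.
Qed.

Lemma copula_lipl y x1 x2 : 0 <= y -> y <= 1 ->
  0 <= x1 -> x1 <= x2 -> x2 <= 1 -> C x2 y - C x1 y <= x2 - x1.
Proof.
move=> y0 y1 x10 x12 x21.
have := copula_volume_ge0 x10 x12 x21 y0 y1 (lexx 1); rewrite /volume.
have [-> _] := copula_margins x10 (le_trans x12 x21).
have [-> _] := copula_margins (le_trans x10 x12) x21.
lra.
Qed.

Lemma copula_lipr x y1 y2 : 0 <= x -> x <= 1 ->
  0 <= y1 -> y1 <= y2 -> y2 <= 1 -> C x y2 - C x y1 <= y2 - y1.
Proof.
move=> x0 x1 y10 y12 y21.
have := copula_volume_ge0 x0 x1 (lexx 1) y10 y12 y21; rewrite /volume.
have [_ ->] := copula_margins y10 (le_trans y12 y21).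
have [_ ->] := copula_margins (le_trans y10 y12) y21.
lra.
Qed.

Lemma copula_le_left x y : 0 <= x -> x <= 1 -> 0 <= y -> y <= 1 -> C x y <= x.
Proof.
move=> x0 x1 y0 y1; have := copula_monor x0 x1 y0 y1 (lexx 1).
by have [-> _] := copula_margins x0 x1.
Qed.

Lemma copula_incr_le_diag x s t : 0 <= x -> x <= s -> s <= t -> t <= 1 ->
  C x t - C x s <= C t t - C s s.
Proof.
move=> x0 xs st t1; have s0 := le_trans x0 xs.
have := copula_volume_ge0 x0 (le_trans xs st) t1 s0 st t1.
have := copula_monol s0 (le_trans st t1) s0 st t1.
rewrite /volume; lra.
Qed.

End CopulaFacts.

Section Splice.
Variables (R : realType) (delta : R -> R).
Hypothesis diag_delta : diagonal_section delta.

Lemma diagonal_witness :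
  exists2 C, copula C & forall t, 0 <= t -> t <= 1 -> C t t = delta t.
Proof. by case: diag_delta => C [cC dC]; exists C => // t *; apply: dC; apply/andP. Qed.

Lemma delta0 : delta 0 = 0.
Proof.
have [C cC dC] := diagonal_witness.
by rewrite -dC ?lexx ?ler01 //; have [] := copula_grounded cC (lexx 0) ler01.
Qed.

Lemma delta1 : delta 1 = 1.
Proof.
have [C cC dC] := diagonal_witness.
by rewrite -dC ?lexx ?ler01 //; have [] := copula_margins cC ler01 (lexx 1).
Qed.

Lemma delta_le t : 0 <= t -> t <= 1 -> delta t <= t.
Proof.
move=> t0 t1; have [C cC dC] := diagonal_witness.
by rewrite -dC //; apply: copula_le_left.
Qed.

Lemma delta_mono s t : 0 <= s -> s <= t -> t <= 1 -> delta s <= delta t.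
Proof.
move=> s0 st t1; have [C cC dC] := diagonal_witness; have t0 := le_trans s0 st.
rewrite -(dC s) ?(le_trans st t1) // -(dC t) //.
have := copula_monor cC s0 (le_trans st t1) s0 st t1.
have := copula_monol cC t0 t1 s0 st t1; lra.
Qed.

Lemma delta_lip s t : 0 <= s -> s <= t -> t <= 1 -> delta t - delta s <= 2 * (t - s).
Proof.
move=> s0 st t1; have [C cC dC] := diagonal_witness; have t0 := le_trans s0 st.
rewrite -(dC s) ?(le_trans st t1) // -(dC t) //.
have := copula_lipr cC s0 (le_trans st t1) s0 st t1.
have := copula_lipl cC t0 t1 s0 st t1; lra.
Qed.

Lemma delta_hat_ge0 t : 0 <= t -> t <= 1 -> 0 <= delta_hat delta t.
Proof. by move=> t0 t1; have := delta_le t0 t1; rewrite /delta_hat; lra. Qed.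

Definition hat_min (a b : R) : R :=
  inf [set delta_hat delta t | t in [set t | a <= t <= b]].

Lemma Bertino_lower x y : y <= x -> Bertino delta x y = y - hat_min y x.
Proof. by move=> yx; rewrite /Bertino (min_r yx) (max_l yx). Qed.

Lemma hat_min_le a b u : 0 <= a -> b <= 1 -> a <= u -> u <= b ->
  hat_min a b <= delta_hat delta u.
Proof.
move=> a0 b1 au ub; apply: ge_inf; last by exists u => //; apply/andP.
by exists 0 => _ [v /andP[av vb] <-]; apply: delta_hat_ge0; lra.
Qed.

Lemma le_hat_min a b L : a <= b ->
  (forall t, a <= t -> t <= b -> L <= delta_hat delta t) -> L <= hat_min a b.
Proof.
move=> ab HL; apply: lb_le_inf; last by move=> _ [u /andP[au ub] <-]; apply: HL.
by exists (delta_hat delta a), a => //; apply/andP; rewrite lexx ab.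
Qed.

Lemma hat_min_id t : 0 <= t -> t <= 1 -> hat_min t t = delta_hat delta t.
Proof.
move=> t0 t1; apply/eqP; rewrite eq_le hat_min_le ?lexx //=.
by apply: le_hat_min => // u tu ut; have -> : u = t by apply/eqP; rewrite eq_le ut tu.
Qed.

Lemma hat_min_split a b c : 0 <= a -> a <= b -> b <= c -> c <= 1 ->
  hat_min a c = Num.min (hat_min a b) (hat_min b c).
Proof.
move=> a0 ab bc c1; apply/eqP; rewrite eq_le le_min; apply/andP; split.
  by apply/andP; split; apply: le_hat_min => // t *; apply: hat_min_le; lra.
apply: le_hat_min; first exact: le_trans ab bc.
move=> u au uc; case: (leP u b) => [ub | bu].
  have := hat_min_le a0 (le_trans bc c1) au ub; case_min_max; lra.
have := hat_min_le (le_trans a0 ab) c1 (ltW bu) uc; case_min_max; lra.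
Qed.

Lemma hat_min0x x : 0 <= x -> x <= 1 -> hat_min 0 x = 0.
Proof.
move=> x0 x1; apply/eqP; rewrite eq_le; apply/andP; split.
  by have := hat_min_le (lexx 0) x1 (lexx 0) x0; rewrite /delta_hat delta0 subr0.
by apply: le_hat_min => // t *; apply: delta_hat_ge0; lra.
Qed.

Lemma hat_minx1 x : 0 <= x -> x <= 1 -> hat_min x 1 = 0.
Proof.
move=> x0 x1; apply/eqP; rewrite eq_le; apply/andP; split.
  by have := hat_min_le x0 (lexx 1) x1 (lexx 1); rewrite /delta_hat delta1 subrr.
by apply: le_hat_min => // t *; apply: delta_hat_ge0; lra.
Qed.

Definition admissible (f : R -> R) : Prop :=
  f 0 = 0 /\ forall s t, 0 <= s -> s <= t -> t <= 1 ->
    f t - f s <= Num.min (t - s) (delta t - delta s).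

Definition admissible_sup (y : R) : R := sup [set f y | f in admissible].

Lemma admissible0 : admissible (fun=> 0).
Proof. by split=> // s t s0 st t1; have := delta_mono s0 st t1; case_min_max; lra. Qed.

Lemma admissible_le f y : admissible f -> 0 <= y -> y <= 1 -> f y <= y.
Proof.
by case=> f0 incr y0 y1; have := incr 0 y (lexx 0) y0 y1; rewrite f0; case_min_max; lra.
Qed.

Lemma admissible_sup_ub f y : admissible f -> 0 <= y -> y <= 1 -> f y <= admissible_sup y.
Proof.
move=> af y0 y1; apply: ub_le_sup; last by exists f.
by exists 1 => _ [g ag <-]; have := admissible_le ag y0 y1; lra.
Qed.

Lemma admissible_sup_le y z : (forall f, admissible f -> f y <= z) -> admissible_sup y <= z.
Proof.
move=> Hz; apply: ge_sup; last by move=> _ [g ag <-]; apply: Hz.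
by exists 0, (fun=> 0) => //; apply: admissible0.
Qed.

Lemma admissible_sup_incr_le s t : 0 <= s -> s <= t -> t <= 1 ->
  admissible_sup t - admissible_sup s <= Num.min (t - s) (delta t - delta s).
Proof.
move=> s0 st t1.
suff : admissible_sup t <= admissible_sup s + Num.min (t - s) (delta t - delta s) by lra.
apply: admissible_sup_le => f af.
have := af.2 s t s0 st t1; have := admissible_sup_ub af s0 (le_trans st t1); lra.
Qed.

(* Raising g beyond s by the accumulated decrease of delta_hat stays
   admissible, because delta is 2-Lipschitz. *)
Lemma admissible_lift g s : admissible g -> 0 <= s -> s <= 1 ->
  admissible (fun u => g (Num.min u s) +
    Num.max 0 ((delta (Num.max u s) - Num.max u s) - (delta s - s))).
Proof.
move=> [g0 incr] s0 s1; split; first by have := g0; case_min_max; lra.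
move=> u v u0 uv v1; case: (leP v s) => [vs | sv].
  by have := incr u v u0 uv v1; case_min_max; lra.
case: (leP s u) => [su | us].
  by have := delta_lip u0 uv v1; have := delta_mono u0 uv v1; case_min_max; lra.
have := incr u s u0 (ltW us) s1.
have := delta_lip s0 (ltW sv) v1; have := delta_mono s0 (ltW sv) v1.
have := delta_mono u0 (ltW us) s1; case_min_max; lra.
Qed.

Lemma admissible_sup_incr_ge s t : 0 <= s -> s <= t -> t <= 1 ->
  Num.max 0 ((delta t - t) - (delta s - s)) <= admissible_sup t - admissible_sup s.
Proof.
move=> s0 st t1.
suff : admissible_sup s <= admissible_sup t - Num.max 0 ((delta t - t) - (delta s - s)).
  by lra.
apply: admissible_sup_le => g ag.
have := admissible_sup_ub (admissible_lift ag s0 (le_trans st t1)) (le_trans s0 st) t1.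
by rewrite /= (min_r st) (max_l st); lra.
Qed.

Lemma admissible_sup_incr_le_hat_min a b : 0 <= a -> a <= b -> b <= 1 ->
  admissible_sup b - admissible_sup a <= delta b - a + hat_min a b.
Proof.
move=> a0 ab b1.
suff : admissible_sup b - admissible_sup a - delta b + a <= hat_min a b by lra.
apply: le_hat_min => // u au ub.
have := admissible_sup_incr_le (le_trans a0 au) ub b1.
have := admissible_sup_incr_le a0 au (le_trans ub b1).
rewrite /delta_hat; case_min_max; lra.
Qed.

Lemma admissible_glue C g x : copula C -> has_diagonal C delta -> admissible g ->
  0 <= x -> x <= 1 ->
  admissible (fun u => if u <= x then g u else g x + C x u - delta x).
Proof.
move=> cC dC [g0 incr] x0 x1.
have dC' t : 0 <= t -> t <= 1 -> C t t = delta t by move=> *; apply: dC; apply/andP.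
have incrC s t : x <= s -> s <= t -> t <= 1 -> C x t - C x s <= delta t - delta s.
  move=> xs st t1; rewrite -dC' ?(le_trans x0 (le_trans xs st)) // -dC' ?(le_trans x0 xs) //.
  - exact: copula_incr_le_diag.
  - exact: le_trans st t1.
split; first by rewrite x0.
move=> u v u0 uv v1; case: (leP v x) => [vx | xv].
  by rewrite (le_trans uv vx); apply: incr.
case: (leP u x) => [ux | xu].
  have := incr u x u0 ux (le_trans (ltW xv) v1).
  have := copula_lipr cC x0 x1 x0 (ltW xv) v1.
  have := incrC x v (lexx x) (ltW xv) v1.
  rewrite dC' //; case_min_max; lra.
have := copula_lipr cC x0 x1 (le_trans x0 (ltW xu)) uv v1.
have := incrC u v (ltW xu) uv v1; case_min_max; lra.
Qed.


Lemma copula_incr_le_admissible_sup C x y :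
  copula C -> has_diagonal C delta -> 0 <= x -> x <= y -> y <= 1 ->
  C x y - delta x <= admissible_sup y - admissible_sup x.
Proof.
move=> cC dC x0 xy y1; have x1 := le_trans xy y1.
suff : admissible_sup x <= admissible_sup y - (C x y - delta x) by lra.
apply: admissible_sup_le => g ag.
have := admissible_sup_ub (admissible_glue cC dC ag x0 x1) (le_trans x0 xy) y1 => /=.
case: (leP y x) => [yx | xy']; last by lra.
have -> : y = x by apply/eqP; rewrite eq_le yx xy.
have -> : C x x = delta x by apply: dC; apply/andP.
lra.
Qed.

Definition Cbar_upper (x y : R) : R :=
  Num.min x (delta x + admissible_sup y - admissible_sup x).

Definition splice (x y : R) : R := if x <= y then Cbar_upper x y else Bertino delta x y.

Lemma splice_upper x y : x <= y -> splice x y = Cbar_upper x y.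
Proof. by rewrite /splice => ->. Qed.

Lemma splice_diag t : 0 <= t -> t <= 1 -> splice t t = delta t.
Proof.
by move=> t0 t1; rewrite splice_upper // /Cbar_upper; have := delta_le t0 t1; case_min_max; lra.
Qed.

Lemma splice_lower x y : 0 <= y -> y <= x -> x <= 1 -> splice x y = y - hat_min y x.
Proof.
move=> y0 yx x1; case: (leP x y) => [xy | ltyx].
  have <- : x = y by apply/eqP; rewrite eq_le xy yx.
  by rewrite splice_diag ?hat_min_id ?(le_trans y0 yx) // /delta_hat; lra.
by rewrite /splice leNgt ltyx /= (Bertino_lower yx).
Qed.

Lemma splice_volume_upper_ge0 x1 x2 y1 y2 :
  0 <= x1 -> x1 <= x2 -> x2 <= y1 -> y1 <= y2 -> y2 <= 1 ->
  0 <= volume splice x1 x2 y1 y2.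
Proof.
move=> x10 x12 x2y1 y12 y21; rewrite /volume !splice_upper; try lra.
have := admissible_sup_incr_ge x10 x12 (le_trans x2y1 (le_trans y12 y21)).
have := admissible_sup_incr_ge (le_trans x10 (le_trans x12 x2y1)) y12 y21.
rewrite /Cbar_upper; case_min_max; lra.
Qed.

Lemma splice_volume_lower_ge0 x1 x2 y1 y2 :
  0 <= y1 -> y1 <= y2 -> y2 <= x1 -> x1 <= x2 -> x2 <= 1 ->
  0 <= volume splice x1 x2 y1 y2.
Proof.
move=> y10 y12 y2x1 x12 x21; rewrite /volume !splice_lower; try lra.
rewrite (hat_min_split y10 y12 (le_trans y2x1 x12) x21).
rewrite (hat_min_split (le_trans y10 y12) y2x1 x12 x21).
rewrite (hat_min_split y10 y12 y2x1 (le_trans x12 x21)).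
case_min_max; lra.
Qed.

Lemma splice_volume_square_ge0 a b : 0 <= a -> a <= b -> b <= 1 -> 0 <= volume splice a b a b.
Proof.
move=> a0 ab b1; rewrite /volume (splice_upper ab) (splice_lower a0 ab b1).
rewrite !splice_diag ?(le_trans ab b1) ?(le_trans a0 ab) //.
have := admissible_sup_incr_le_hat_min a0 ab b1.
rewrite /Cbar_upper; case_min_max; lra.
Qed.

Lemma splice_copula : copula splice.
Proof.
split.
  move=> x /unit_IP[x0 x1]; rewrite (splice_lower (lexx 0) x0 x1) hat_min0x // subr0.
  split=> //; rewrite (splice_upper x0) /Cbar_upper.
  have := admissible_sup_incr_ge (lexx 0) x0 x1; rewrite delta0; case_min_max; lra.
split.
  move=> x /unit_IP[x0 x1]; rewrite (splice_lower x0 x1 (lexx 1)) hat_minx1 // subr0.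
  split=> //; rewrite (splice_upper x1) /Cbar_upper.
  have := admissible_sup_incr_ge x0 x1 (lexx 1); rewrite delta1; case_min_max; lra.
move=> x1 x2 y1 y2 /unit_IP[x10 x11] /unit_IP[x20 x21] /unit_IP[y10 y11] /unit_IP[y20 y21] x12 y12.
apply: volume_ge0_by_diagonal => //.
- exact: splice_volume_upper_ge0.
- exact: splice_volume_lower_ge0.
- exact: splice_volume_square_ge0.
Qed.

Lemma splice_has_diagonal : has_diagonal splice delta.
Proof. by move=> t /unit_IP[t0 t1]; apply: splice_diag. Qed.

Lemma copula_le_Cbar_upper C x y : copula C -> has_diagonal C delta ->
  0 <= x -> x <= y -> y <= 1 -> C x y <= Cbar_upper x y.
Proof.
move=> cC dC x0 xy y1; rewrite /Cbar_upper.
have := copula_incr_le_admissible_sup cC dC x0 xy y1.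
have := copula_le_left cC x0 (le_trans xy y1) (le_trans x0 xy) y1.
case_min_max; lra.
Qed.

Lemma Cbar_upperE x y : 0 <= x -> x <= y -> y <= 1 -> Cbar delta x y = Cbar_upper x y.
Proof.
move=> x0 xy y1.
have splice_in : copula splice /\ has_diagonal splice delta.
  by split; [exact: splice_copula | exact: splice_has_diagonal].
have ub : ubound [set C x y | C in [set C | copula C /\ has_diagonal C delta]] (Cbar_upper x y).
  by move=> _ [C [cC dC] <-]; apply: copula_le_Cbar_upper.
apply/eqP; rewrite eq_le; apply/andP; split; first by apply: ge_sup => //; exists (splice x y), splice.
by apply: ub_le_sup; [exists (Cbar_upper x y) | exists splice; last exact: splice_upper].
Qed.

End Splice.

Theorem proposition4p3 (R : realType) (delta : R -> R) :
  diagonal_section delta -> copula (Dsplice delta).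
Proof.
move=> diag_delta; apply: copula_ext (splice_copula diag_delta).
move=> x y /unit_IP[x0 x1] /unit_IP[y0 y1]; rewrite /splice /Dsplice.
by case: ifP => // xy; rewrite Cbar_upperE.
Qed.
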